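(* Let $\mu>0$ and $f\in C^2([0,1])$. Then for every $x\in[0,1]$, $$\lim_{n\to+\infty} n\left[\mathscr{L}_n^K(f,x)-f(x)\right]=\ln_\mu(x)\left[f_\mu'(x)\left(\frac12+\frac{x-x^2}{2(1+\mu)}-x\right)+f_\mu''(x)\,\frac{x-x^2}{2}\right].$$
   Context: Fix $\mu>0$. Let $\ln_\mu(x):=\ln(1+\mu+x)$ for $x\in[0,1]$, and for $f:[0,1]\to\mathbb{R}$ let $f_\mu(x):=f(x)/\ln_\mu(x)$. Let $p_{n,k}(y):=\binom{n}{k}y^k(1-y)^{n-k}$ and $a_{n+1}(x):=\dfrac{\ln\left(1+\frac{x}{(n+1)(1+\mu)}\right)}{\ln\left(1+\frac{1}{(n+1)(1+\mu)}\right)}$, $x\in[0,1]$. For $n\in\mathbb{N}$ define $\mathscr{L}_n^K(f,x)=\mathscr{L}_n^K f(x):=\ln_\mu(x)\sum_{k=0}^n p_{n,k}(a_{n+1}(x))\,(n+1)\int_{k/(n+1)}^{(k+1)/(n+1)} f_\mu(t)\,dt$, $x\in[0,1]$. *)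

From Stdlib Require Import Reals.
From Coquelicot Require Import Coquelicot.
Open Scope R_scope.

Definition in01 (x : R) : Prop := 0 <= x <= 1.

Definition ln_mu (mu x : R) : R := ln (1 + mu + x).

Definition f_mu (mu : R) (f : R -> R) (x : R) : R := f x / ln_mu mu x.

Definition p_nk (n k : nat) (y : R) : R := Binomial.C n k * y ^ k * (1 - y) ^ (n - k).

Definition a_n1 (mu : R) (n : nat) (x : R) : R :=
  ln (1 + x / (INR (n + 1) * (1 + mu))) / ln (1 + 1 / (INR (n + 1) * (1 + mu))).

Definition LK (mu : R) (n : nat) (f : R -> R) (x : R) : R :=
  ln_mu mu x *
  sum_f_R0 (fun k => p_nk n k (a_n1 mu n x) * INR (n + 1) *
                     RInt (f_mu mu f) (INR k / INR (n + 1)) (INR (k + 1) / INR (n + 1))) n.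

Definition deriv01 (g g' : R -> R) : Prop :=
  forall x, in01 x ->
    filterlim (fun y => (g y - g x) / (y - x))
              (within (fun y => in01 y /\ y <> x) (locally x))
              (locally (g' x)).

Definition cont01 (g : R -> R) : Prop :=
  forall x, in01 x -> filterlim g (within in01 (locally x)) (locally (g x)).

(* f in C^2([0,1]) (only the values of f on [0,1] matter) *)
Definition C2_01 (f : R -> R) : Prop :=
  exists f1 f2 : R -> R, deriv01 f f1 /\ deriv01 f1 f2 /\ cont01 f2.

From Stdlib Require Import Reals Lra Lia.
From Coquelicot Require Import Coquelicot.
Open Scope R_scope.

(* With g := f_mu and y_n := a_{n+1}(x) we have L_n^K f x = ln_mu x * K_n g (y_n), where
   K_n is the classical Kantorovich operator, and expanding the logarithms to second
   order gives n (y_n - x) -> x (1 - x) / (2 (1 + mu)).  The theorem is thus a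
   Voronovskaya formula for K_n at the moving points y_n.  Split g into its Taylor
   polynomial of degree 2 at x and a remainder bounded on [0,1] by
   eps (t - x)^2 + C (t - x)^4: K_n of the polynomial is computed exactly from the
   Bernstein moments, and the central Bernstein moments of order 2 and 4 show that the
   remainder changes n K_n g (y_n) by only O(eps) + o(1). *)

Definition bernstein_mean (n : nat) (y : R) (phi : nat -> R) : R :=
  sum_f_R0 (fun k => p_nk n k y * phi k) n.

Lemma bernstein_mean_ext n y phi psi :
  (forall k, (k <= n)%nat -> phi k = psi k) ->
  bernstein_mean n y phi = bernstein_mean n y psi.
Proof. intros H; apply sum_eq; intros k Hk; rewrite H; auto. Qed.

Lemma bernstein_mean_lin n y a phi psi :
  bernstein_mean n y (fun k => a * phi k + psi k) =
  a * bernstein_mean n y phi + bernstein_mean n y psi.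
Proof.
  unfold bernstein_mean. rewrite scal_sum, <- plus_sum.
  apply sum_eq; intros; ring.
Qed.

Lemma bernstein_mean_poly4 n y a0 a1 a2 a3 a4 :
  bernstein_mean n y
    (fun k => a0 + a1 * INR k + a2 * INR k ^ 2 + a3 * INR k ^ 3 + a4 * INR k ^ 4) =
  a0 * bernstein_mean n y (fun _ => 1) + a1 * bernstein_mean n y INR
  + a2 * bernstein_mean n y (fun k => INR k ^ 2)
  + a3 * bernstein_mean n y (fun k => INR k ^ 3)
  + a4 * bernstein_mean n y (fun k => INR k ^ 4).
Proof.
  unfold bernstein_mean. generalize n at 2 4 6 8 10 12 as N.
  induction N; [simpl; ring | rewrite !tech5, IHN; ring].
Qed.

Lemma p_nk_pascal n k y : (k < n)%nat ->
  p_nk (S n) (S k) y = y * p_nk n k y + (1 - y) * p_nk n (S k) y.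
Proof.
  intros H; unfold p_nk. rewrite <- pascal by auto.
  replace (S n - S k)%nat with (n - k)%nat by lia.
  replace (n - k)%nat with (S (n - S k)) by lia. simpl. ring.
Qed.

(* One more Bernoulli trial: k stays put with probability 1 - y and moves to k + 1
   with probability y. *)
Lemma bernstein_mean_S n y phi :
  bernstein_mean (S n) y phi =
  bernstein_mean n y (fun k => (1 - y) * phi k + y * phi (S k)).
Proof.
  destruct n as [|n].
  { unfold bernstein_mean, p_nk; simpl. rewrite !C_n_0, C_n_n. ring. }
  (* Stdlib's [C n k] does not vanish for k > n, so the boundary terms k = 0 and
     k = n + 1 are split off by hand. *)
  unfold bernstein_mean. rewrite decomp_sum by lia. simpl Init.Nat.pred. rewrite tech5.
  rewrite (sum_eq (fun i => p_nk (S (S n)) (S i) y * phi (S i))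
                  (fun i => p_nk (S n) i y * (y * phi (S i))
                             + (1 - y) * p_nk (S n) (S i) y * phi (S i))).
  2:{ intros i Hi. rewrite p_nk_pascal by lia. ring. }
  rewrite (decomp_sum (fun k => p_nk (S n) k y * ((1 - y) * phi k + y * phi (S k))))
    by lia.
  simpl Init.Nat.pred.
  rewrite (sum_eq (fun i => p_nk (S n) (S i) y * ((1 - y) * phi (S i) + y * phi (S (S i))))
                  (fun i => (1 - y) * p_nk (S n) (S i) y * phi (S i)
                            + p_nk (S n) (S i) y * (y * phi (S (S i))))).
  2:{ intros; ring. }
  rewrite !plus_sum.
  replace (sum_f_R0 (fun i => p_nk (S n) (S i) y * (y * phi (S (S i)))) n)
    with (sum_f_R0 (fun i => p_nk (S n) i y * (y * phi (S i))) (S n)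
          - p_nk (S n) 0 y * (y * phi 1%nat))
    by (rewrite (decomp_sum _ (S n)) by lia; simpl; ring).
  rewrite tech5.
  unfold p_nk. rewrite !C_n_0, !C_n_n, !Nat.sub_diag, !Nat.sub_0_r. simpl pow. ring.
Qed.

Local Ltac bernstein_shift c0 c1 c2 c3 c4 :=
  rewrite bernstein_mean_S,
    (bernstein_mean_ext _ _ _
       (fun k => c0 + c1 * INR k + c2 * INR k ^ 2 + c3 * INR k ^ 3 + c4 * INR k ^ 4))
    by (intros; rewrite ?S_INR; ring);
  rewrite bernstein_mean_poly4.

Lemma bernstein_moments n y :
  let m := INR n in
  bernstein_mean n y (fun _ => 1) = 1 /\
  bernstein_mean n y INR = m * y /\
  bernstein_mean n y (fun k => INR k ^ 2) = m * (m - 1) * y ^ 2 + m * y /\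
  bernstein_mean n y (fun k => INR k ^ 3) =
    m * (m - 1) * (m - 2) * y ^ 3 + 3 * m * (m - 1) * y ^ 2 + m * y /\
  bernstein_mean n y (fun k => INR k ^ 4) =
    m * (m - 1) * (m - 2) * (m - 3) * y ^ 4 + 6 * m * (m - 1) * (m - 2) * y ^ 3
    + 7 * m * (m - 1) * y ^ 2 + m * y.
Proof.
  induction n as [|n IH]; cbv zeta.
  { unfold bernstein_mean, p_nk. simpl. rewrite C_n_0. repeat split; ring. }
  destruct IH as (H0 & H1 & H2 & H3 & H4).
  repeat split;
    [ bernstein_shift 1 0 0 0 0
    | bernstein_shift y 1 0 0 0
    | bernstein_shift y (2 * y) 1 0 0
    | bernstein_shift y (3 * y) (3 * y) 1 0
    | bernstein_shift y (4 * y) (6 * y) (4 * y) 1 ];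
    rewrite H0, H1, H2, H3, H4, ?S_INR; ring.
Qed.

Lemma bernstein_mean_const n y c : bernstein_mean n y (fun _ => c) = c.
Proof.
  destruct (bernstein_moments n y) as (H0 & H1 & H2 & H3 & H4).
  rewrite (bernstein_mean_ext _ _ _ (fun k => c + 0 * INR k + 0 * INR k ^ 2
                                             + 0 * INR k ^ 3 + 0 * INR k ^ 4))
    by (intros; ring).
  rewrite bernstein_mean_poly4, H0, H1, H2, H3, H4. ring.
Qed.

Lemma bernstein_central_moment2 n y :
  bernstein_mean n y (fun k => (INR k - INR n * y) ^ 2) = INR n * y * (1 - y).
Proof.
  destruct (bernstein_moments n y) as (H0 & H1 & H2 & H3 & H4).
  rewrite (bernstein_mean_ext _ _ _
    (fun k => (INR n * y) ^ 2 + (- 2 * INR n * y) * INR k + 1 * INR k ^ 2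
              + 0 * INR k ^ 3 + 0 * INR k ^ 4)) by (intros; ring).
  rewrite bernstein_mean_poly4, H0, H1, H2, H3, H4. ring.
Qed.

Lemma bernstein_central_moment4 n y :
  bernstein_mean n y (fun k => (INR k - INR n * y) ^ 4) =
  INR n * y * (1 - y) * (1 + 3 * (INR n - 2) * y * (1 - y)).
Proof.
  destruct (bernstein_moments n y) as (H0 & H1 & H2 & H3 & H4).
  rewrite (bernstein_mean_ext _ _ _
    (fun k => (INR n * y) ^ 4 + (- 4 * (INR n * y) ^ 3) * INR k
              + (6 * (INR n * y) ^ 2) * INR k ^ 2 + (- 4 * INR n * y) * INR k ^ 3
              + 1 * INR k ^ 4)) by (intros; ring).
  rewrite bernstein_mean_poly4, H0, H1, H2, H3, H4. ring.
Qed.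

Lemma p_nk_ge0 n k y : 0 <= y <= 1 -> 0 <= p_nk n k y.
Proof.
  intros Hy. unfold p_nk, Binomial.C.
  assert (0 < INR (Factorial.fact k) * INR (Factorial.fact (n - k))).
  { apply Rmult_lt_0_compat; apply lt_0_INR, Factorial.lt_O_fact. }
  assert (0 <= INR (Factorial.fact n)) by apply pos_INR.
  assert (0 <= y ^ k) by (apply pow_le; lra).
  assert (0 <= (1 - y) ^ (n - k)) by (apply pow_le; lra).
  apply Rmult_le_pos; [apply Rmult_le_pos|]; auto.
  apply Rdiv_le_0_compat; auto.
Qed.

Lemma bernstein_mean_abs_le n y phi psi : 0 <= y <= 1 ->
  (forall k, (k <= n)%nat -> Rabs (phi k) <= psi k) ->
  Rabs (bernstein_mean n y phi) <= bernstein_mean n y psi.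
Proof.
  intros Hy H. eapply Rle_trans; [apply sum_f_R0_triangle|].
  apply sum_Rle. intros k Hk.
  rewrite Rabs_mult, (Rabs_pos_eq (p_nk n k y)) by (apply p_nk_ge0; auto).
  apply Rmult_le_compat_l; [apply p_nk_ge0|apply H]; auto.
Qed.

Definition deriv01_at (g : R -> R) (x l : R) : Prop :=
  filterlim (fun y => (g y - g x) / (y - x))
            (within (fun y => in01 y /\ y <> x) (locally x)) (locally l).

Lemma deriv01_at_eps g x l : deriv01_at g x l ->
  forall eps, 0 < eps -> exists d, 0 < d /\
    forall z, in01 z -> z <> x -> Rabs (z - x) < d ->
      Rabs ((g z - g x) / (z - x) - l) < eps.
Proof.
  intros H eps He. unfold deriv01_at in H. rewrite filterlim_locally in H.
  destruct (H (mkposreal eps He)) as [d Hd].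
  exists d; split; [apply cond_pos|]. intros z Hz Hzx Hd'. apply (Hd z); auto.
Qed.

Lemma deriv01_at_continuous g x l : deriv01_at g x l ->
  forall eps, 0 < eps -> exists d, 0 < d /\
    forall z, in01 z -> Rabs (z - x) < d -> Rabs (g z - g x) < eps.
Proof.
  intros H eps He.
  destruct (deriv01_at_eps g x l H 1 Rlt_0_1) as [d [Hd Hq]].
  set (K := Rabs l + 1).
  assert (HK : 0 < K) by (unfold K; pose proof (Rabs_pos l); lra).
  exists (Rmin d (eps / K)); split.
  { apply Rmin_glb_lt; auto. apply Rdiv_lt_0_compat; auto. }
  intros z Hz Hzd.
  destruct (Req_dec z x) as [->|Hne].
  { rewrite Rminus_diag, Rabs_R0; auto. }
  assert (Hzx : z - x <> 0) by lra.
  assert (Hq' : Rabs ((g z - g x) / (z - x)) <= K).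
  { specialize (Hq z Hz Hne (Rlt_le_trans _ _ _ Hzd (Rmin_l _ _))).
    pose proof (Rabs_triang_inv ((g z - g x) / (z - x)) l). unfold K; lra. }
  replace (g z - g x) with ((g z - g x) / (z - x) * (z - x)) by (field; auto).
  rewrite Rabs_mult.
  apply Rle_lt_trans with (K * Rabs (z - x)).
  { apply Rmult_le_compat_r; auto using Rabs_pos. }
  apply (Rmult_lt_compat_l K) in Hzd; auto.
  eapply Rlt_le_trans; [exact Hzd|].
  rewrite Rmult_comm. apply Rle_trans with (eps / K * K); [|right; field; lra].
  apply Rmult_le_compat_r; [lra | apply Rmin_r].
Qed.

Definition clamp (t : R) : R := Rmax 0 (Rmin 1 t).

Lemma clamp_in01 t : in01 (clamp t).
Proof. unfold clamp, in01, Rmax, Rmin. repeat destruct Rle_dec; lra. Qed.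

Lemma clamp_id t : in01 t -> clamp t = t.
Proof. unfold clamp, in01, Rmax, Rmin. intros. repeat destruct Rle_dec; lra. Qed.

Lemma clamp_lipschitz a b : Rabs (clamp a - clamp b) <= Rabs (a - b).
Proof.
  pose proof (Rle_abs (a - b)).
  assert (b - a <= Rabs (a - b)) by (rewrite Rabs_minus_sym; apply Rle_abs).
  unfold clamp, Rmax, Rmin. apply Rabs_le. repeat destruct Rle_dec; lra.
Qed.

Lemma in01_between a b c : in01 a -> in01 b -> Rmin a b <= c <= Rmax a b -> in01 c.
Proof. unfold in01, Rmin, Rmax. destruct Rle_dec; lra. Qed.

Lemma Rabs_between_le a b c : Rmin a b <= c <= Rmax a b -> Rabs (c - a) <= Rabs (b - a).
Proof.
  pose proof (Rle_abs (b - a)).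
  assert (a - b <= Rabs (b - a)) by (rewrite Rabs_minus_sym; apply Rle_abs).
  unfold Rmin, Rmax. destruct Rle_dec; intros; apply Rabs_le; lra.
Qed.

(* Coquelicot's integrability and mean value lemmas ask for continuity and
   differentiability on all of R; composing with [clamp] extends a function
   continuously without changing it on [0,1]. *)
Lemma continuous_clamp_comp g g' : deriv01 g g' ->
  forall t, continuous (fun s => g (clamp s)) t.
Proof.
  intros H t. apply continuity_pt_filterlim. intros eps He.
  destruct (deriv01_at_continuous g (clamp t) (g' (clamp t)) (H _ (clamp_in01 t)) eps He)
    as [d [Hd Hz]].
  exists d; split; auto. intros s [_ Hs]. simpl in *. unfold R_dist in *.
  apply Hz; [apply clamp_in01|]. eapply Rle_lt_trans; [apply clamp_lipschitz|]; auto.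
Qed.

Lemma is_derive_clamp_comp g g' : deriv01 g g' ->
  forall z, 0 < z < 1 -> is_derive (fun s => g (clamp s)) z (g' z).
Proof.
  intros H z Hz. apply is_derive_Reals. intros eps He.
  assert (Hz' : in01 z) by (unfold in01; lra).
  destruct (deriv01_at_eps g z (g' z) (H z Hz') eps He) as [d [Hd Hw]].
  assert (Hpos : 0 < Rmin d (Rmin z (1 - z))) by (repeat apply Rmin_glb_lt; lra).
  exists (mkposreal _ Hpos). intros h Hh0 Hh. simpl in Hh.
  pose proof (Rmin_l d (Rmin z (1 - z))). pose proof (Rmin_r d (Rmin z (1 - z))).
  pose proof (Rmin_l z (1 - z)). pose proof (Rmin_r z (1 - z)).
  pose proof (Rle_abs h). pose proof (Rle_abs (- h)). rewrite Rabs_Ropp in *.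
  assert (Hzh : in01 (z + h)) by (unfold in01; lra).
  rewrite (clamp_id (z + h)), (clamp_id z) by auto.
  specialize (Hw (z + h) Hzh ltac:(lra)).
  replace (z + h - z) with h in Hw by ring. apply Hw; lra.
Qed.

Lemma taylor_mvt_01 g g1 a x t : deriv01 g g1 -> in01 x -> in01 t ->
  exists c, Rmin x t <= c <= Rmax x t /\
    g t - (g x + g1 x * (t - x) + a / 2 * (t - x) ^ 2) =
    (g1 c - g1 x - a * (c - x)) * (t - x).
Proof.
  intros Hg Hx Ht.
  set (P := fun s => g x + g1 x * (s - x) + a / 2 * (s - x) ^ 2).
  destruct (MVT_gen (fun s => g (clamp s) - P s) x t (fun s => g1 s - (g1 x + a * (s - x))))
    as [c [Hc Heq]].
  - intros s Hs. apply (is_derive_minus (fun s => g (clamp s)) P).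
    + apply (is_derive_clamp_comp g g1 Hg). unfold in01 in *.
      revert Hs; unfold Rmin, Rmax; destruct Rle_dec; lra.
    + unfold P. auto_derive; auto. field.
  - intros s _. apply continuity_pt_minus.
    + apply continuity_pt_filterlim, (continuous_clamp_comp g g1 Hg).
    + apply continuity_pt_filterlim, (ex_derive_continuous P). unfold P. auto_derive; auto.
  - exists c; split; auto. rewrite (clamp_id t Ht), (clamp_id x Hx) in Heq.
    unfold P in Heq. replace ((x - x) ^ 2) with 0 in Heq by ring.
    rewrite Rminus_diag in Heq. lra.
Qed.

Lemma taylor_peano_01 g g1 g2x x : deriv01 g g1 -> deriv01_at g1 x g2x -> in01 x ->
  forall eps, 0 < eps -> exists d, 0 < d /\ forall t, in01 t -> Rabs (t - x) < d ->
    Rabs (g t - (g x + g1 x * (t - x) + g2x / 2 * (t - x) ^ 2)) <= eps * (t - x) ^ 2.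
Proof.
  intros Hg Hg1 Hx eps He.
  destruct (deriv01_at_eps g1 x g2x Hg1 eps He) as [d [Hd Hw]].
  exists d; split; auto. intros t Ht Htd.
  destruct (taylor_mvt_01 g g1 g2x x t Hg Hx Ht) as [c [Hc ->]].
  pose proof (Rabs_between_le x t c Hc) as Hcx.
  assert (Hg1c : Rabs (g1 c - g1 x - g2x * (c - x)) <= eps * Rabs (c - x)).
  { destruct (Req_dec c x) as [->|Hcne].
    - rewrite !Rminus_diag, Rmult_0_r, Rminus_diag, Rabs_R0. lra.
    - replace (g1 c - g1 x - g2x * (c - x))
        with (((g1 c - g1 x) / (c - x) - g2x) * (c - x)) by (field; lra).
      rewrite Rabs_mult. apply Rmult_le_compat_r; [apply Rabs_pos|].
      apply Rlt_le, Hw; [apply (in01_between x t c)|..]; auto; lra. }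
  rewrite Rabs_mult, <- (Rabs_pos_eq ((t - x) ^ 2)) by apply pow2_ge_0.
  rewrite <- RPow_abs. simpl. rewrite Rmult_1_r, <- Rmult_assoc.
  apply Rmult_le_compat_r; [apply Rabs_pos|].
  eapply Rle_trans; [exact Hg1c|]. apply Rmult_le_compat_l; lra.
Qed.

Lemma taylor_remainder_01 g g1 g2x x : deriv01 g g1 -> deriv01_at g1 x g2x -> in01 x ->
  forall eps, 0 < eps -> exists C, 0 <= C /\ forall t, in01 t ->
    Rabs (g t - (g x + g1 x * (t - x) + g2x / 2 * (t - x) ^ 2))
      <= eps * (t - x) ^ 2 + C * (t - x) ^ 4.
Proof.
  intros Hg Hg1 Hx eps He.
  set (Rem := fun s => Rabs (g (clamp s) - (g x + g1 x * (s - x) + g2x / 2 * (s - x) ^ 2))).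
  destruct (continuity_ab_maj Rem 0 1 ltac:(lra)) as [tmax [Hmax _]].
  { intros c _. apply continuity_pt_filterlim.
    apply (continuous_comp _ Rabs); [|apply continuous_Rabs].
    apply (continuous_minus (fun s => g (clamp s))); [apply (continuous_clamp_comp g g1 Hg)|].
    apply (ex_derive_continuous (fun s => g x + g1 x * (s - x) + g2x / 2 * (s - x) ^ 2)).
    auto_derive; auto. }
  destruct (taylor_peano_01 g g1 g2x x Hg Hg1 Hx eps He) as [d [Hd Hnear]].
  assert (HC : 0 <= Rem tmax / d ^ 4)
    by (apply Rdiv_le_0_compat; [apply Rabs_pos | apply pow_lt; auto]).
  exists (Rem tmax / d ^ 4). split; [exact HC|]. intros t Ht.
  assert (H2 : 0 <= (t - x) ^ 2) by apply pow2_ge_0.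
  assert (H4 : 0 <= (t - x) ^ 4) by (replace 4%nat with (2 * 2)%nat by lia;
                                     rewrite pow_mult; apply pow2_ge_0).
  destruct (Rlt_le_dec (Rabs (t - x)) d) as [Hlt|Hge].
  - pose proof (Hnear t Ht Hlt). pose proof (Rmult_le_pos _ _ HC H4). lra.
  - assert (Hd4 : d ^ 4 <= (t - x) ^ 4).
    { replace ((t - x) ^ 4) with (Rabs (t - x) ^ 4)
        by (rewrite RPow_abs; apply Rabs_pos_eq; exact H4).
      apply pow_incr; lra. }
    specialize (Hmax t Ht). unfold Rem at 1 in Hmax. rewrite clamp_id in Hmax by auto.
    assert (Rem tmax <= Rem tmax / d ^ 4 * (t - x) ^ 4).
    { unfold Rdiv. rewrite Rmult_assoc. rewrite <- (Rmult_1_r (Rem tmax)) at 1.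
      apply Rmult_le_compat_l; [apply Rabs_pos|].
      apply (Rmult_le_reg_l (d ^ 4)); [apply pow_lt; auto|].
      rewrite <- Rmult_assoc, Rinv_r, Rmult_1_l, Rmult_1_r by (apply pow_nonzero; lra). auto. }
    pose proof (Rmult_le_pos _ _ (Rlt_le _ _ He) H2). lra.
Qed.

Definition cell_mean (n : nat) (g : R -> R) (k : nat) : R :=
  INR (n + 1) * RInt g (INR k / INR (n + 1)) (INR (k + 1) / INR (n + 1)).

Definition kantorovich (n : nat) (g : R -> R) (y : R) : R :=
  bernstein_mean n y (cell_mean n g).

Lemma LK_kantorovich mu n f x :
  LK mu n f x = ln_mu mu x * kantorovich n (f_mu mu f) (a_n1 mu n x).
Proof. unfold LK. f_equal. apply sum_eq. intros. unfold cell_mean. ring. Qed.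

Lemma cell_bounds n k : (k <= n)%nat ->
  let u := / (INR n + 1) in
  INR k / INR (n + 1) = INR k * u /\ INR (k + 1) / INR (n + 1) = INR k * u + u /\
  0 <= INR k * u /\ INR k * u + u <= 1.
Proof.
  intros Hk u. rewrite !plus_INR. simpl (INR 1).
  assert (Hkn : INR k <= INR n) by (apply le_INR; auto).
  pose proof (pos_INR k).
  assert (Hu : 0 < u) by (apply Rinv_0_lt_compat; lra).
  assert (Hum : u * (INR n + 1) = 1) by (unfold u; field; lra).
  repeat split; try (unfold u; field; lra); nra.
Qed.

Lemma cell_mean_ext01 n g h k : (k <= n)%nat -> (forall t, in01 t -> g t = h t) ->
  cell_mean n g k = cell_mean n h k.
Proof.
  intros Hk H. unfold cell_mean. f_equal. apply RInt_ext.
  destruct (cell_bounds n k Hk) as (-> & -> & H0 & H1).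
  rewrite Rmin_left, Rmax_right by (pose proof (Rinv_0_lt_compat (INR n + 1)
                                                  ltac:(pose proof (pos_INR n); lra)); lra).
  intros t Ht. apply H. unfold in01. lra.
Qed.

Lemma kantorovich_ext01 n g h y : (forall t, in01 t -> g t = h t) ->
  kantorovich n g y = kantorovich n h y.
Proof. intros H. apply bernstein_mean_ext. intros. apply cell_mean_ext01; auto. Qed.

Lemma kantorovich_plus n g h y :
  (forall s, continuous g s) -> (forall s, continuous h s) ->
  kantorovich n (fun t => g t + h t) y = kantorovich n g y + kantorovich n h y.
Proof.
  intros Hg Hh. unfold kantorovich.
  rewrite <- (Rmult_1_l (bernstein_mean n y (cell_mean n g))), <- bernstein_mean_lin.
  apply bernstein_mean_ext. intros k _. unfold cell_mean.
  rewrite Rmult_1_l, <- Rmult_plus_distr_l. f_equal.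
  apply (RInt_plus (V := R_CompleteNormedModule) g h);
    apply (ex_RInt_continuous (V := R_CompleteNormedModule)); auto.
Qed.

Lemma cell_mean_quadratic n x a b c k : (k <= n)%nat ->
  let u := / (INR n + 1) in
  cell_mean n (fun t => a + b * (t - x) + c * (t - x) ^ 2) k =
  (a + b * (u / 2 - x) + c * (x ^ 2 - x * u + u ^ 2 / 3))
  + (b * u + c * (u ^ 2 - 2 * x * u)) * INR k + c * u ^ 2 * INR k ^ 2
  + 0 * INR k ^ 3 + 0 * INR k ^ 4.
Proof.
  intros Hk u. unfold cell_mean.
  destruct (cell_bounds n k Hk) as (-> & -> & _ & _). fold u.
  set (F := fun s => a * s + b * (s - x) ^ 2 / 2 + c * (s - x) ^ 3 / 3).
  rewrite (is_RInt_unique _ _ _ (F (INR k * u + u) - F (INR k * u))).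
  - unfold F, u. rewrite plus_INR. simpl (INR 1). field. pose proof (pos_INR n). lra.
  - apply (is_RInt_derive F).
    + intros s _. unfold F. auto_derive; auto. field.
    + intros s _. apply (ex_derive_continuous (fun t => a + b * (t - x) + c * (t - x) ^ 2)).
      auto_derive; auto.
Qed.

(* Written in terms of u = 1/(n+1) and e = n (y - x) so that every term has an evident
   limit as u -> 0 and y -> x. *)
Lemma kantorovich_quadratic n y x a b c :
  let u := / (INR n + 1) in
  let e := INR n * (y - x) in
  INR n * (kantorovich n (fun t => a + b * (t - x) + c * (t - x) ^ 2) y - a) =
  b * ((1 - u) * (e + 1 / 2 - x))
  + c * ((1 - u) * (1 - 2 * u) * (y * (1 - y)) + u * (1 - u) / 3
         + 2 * e * u * (1 / 2 - y) + e * (y - x)).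
Proof.
  intros u e. unfold kantorovich.
  rewrite (bernstein_mean_ext _ _ _
    (fun k => (a + b * (u / 2 - x) + c * (x ^ 2 - x * u + u ^ 2 / 3))
              + (b * u + c * (u ^ 2 - 2 * x * u)) * INR k + c * u ^ 2 * INR k ^ 2
              + 0 * INR k ^ 3 + 0 * INR k ^ 4))
    by (intros k Hk; apply cell_mean_quadratic; auto).
  destruct (bernstein_moments n y) as (H0 & H1 & H2 & H3 & H4).
  rewrite bernstein_mean_poly4, H0, H1, H2, H3, H4.
  unfold u, e. field. pose proof (pos_INR n). lra.
Qed.

Lemma cell_mean_abs_le n h k M : (k <= n)%nat -> (forall s, continuous h s) ->
  (forall t, INR k * / (INR n + 1) <= t <= INR k * / (INR n + 1) + / (INR n + 1) ->
     Rabs (h t) <= M) ->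
  Rabs (cell_mean n h k) <= M.
Proof.
  intros Hk Hh HM. unfold cell_mean.
  destruct (cell_bounds n k Hk) as (-> & -> & _ & _).
  set (u := / (INR n + 1)) in *.
  assert (Hu : 0 < u) by (apply Rinv_0_lt_compat; pose proof (pos_INR n); lra).
  pose proof (abs_RInt_le_const h (INR k * u) (INR k * u + u) M ltac:(lra)
    (ex_RInt_continuous (V := R_CompleteNormedModule) _ _ _ (fun z _ => Hh z)) HM) as H.
  replace (INR k * u + u - INR k * u) with u in H by ring.
  rewrite Rabs_mult, Rabs_pos_eq by apply pos_INR.
  replace M with (INR (n + 1) * (u * M)); [apply Rmult_le_compat_l; auto using pos_INR|].
  unfold u. rewrite plus_INR. simpl (INR 1). field. pose proof (pos_INR n). lra.
Qed.

Lemma sum3_sqr_le a b c : (a + b + c) ^ 2 <= 3 * (a ^ 2 + b ^ 2 + c ^ 2).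
Proof.
  pose proof (pow2_ge_0 (a - b)). pose proof (pow2_ge_0 (b - c)).
  pose proof (pow2_ge_0 (a - c)). nra.
Qed.

Lemma sum3_pow4_le a b c : (a + b + c) ^ 4 <= 27 * (a ^ 4 + b ^ 4 + c ^ 4).
Proof.
  pose proof (sum3_sqr_le a b c) as H1. pose proof (sum3_sqr_le (a ^ 2) (b ^ 2) (c ^ 2)) as H2.
  assert (H3 : ((a + b + c) ^ 2) ^ 2 <= (3 * (a ^ 2 + b ^ 2 + c ^ 2)) ^ 2)
    by (apply pow_incr; split; [apply pow2_ge_0 | exact H1]).
  rewrite <- !pow_mult in *. simpl Nat.mul in *. nra.
Qed.

(* In the k-th cell, [t - x] splits into the Bernstein deviation [u (k - n y)],
   a within-cell offset of size at most [u], and the drift [y - x]. *)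
Lemma cell_deviation_pow_le n k x y t : (k <= n)%nat -> 0 <= y <= 1 ->
  let u := / (INR n + 1) in
  INR k * u <= t <= INR k * u + u ->
  (t - x) ^ 2 <= 3 * (u ^ 2 * (INR k - INR n * y) ^ 2 + u ^ 2 + (y - x) ^ 2) /\
  (t - x) ^ 4 <= 27 * (u ^ 4 * (INR k - INR n * y) ^ 4 + u ^ 4 + (y - x) ^ 4).
Proof.
  intros Hk Hy u Ht.
  assert (Hu : 0 < u) by (apply Rinv_0_lt_compat; pose proof (pos_INR n); lra).
  assert (Hum : u * INR n = 1 - u) by (unfold u; field; pose proof (pos_INR n); lra).
  set (w := t - INR k * u - u * y).
  assert (Hw1 : - u <= w <= u) by (unfold w; split; nra).
  assert (Hw : w ^ 2 <= u ^ 2) by nra.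
  assert (Hw4 : w ^ 4 <= u ^ 4).
  { replace (w ^ 4) with ((w ^ 2) ^ 2) by ring. replace (u ^ 4) with ((u ^ 2) ^ 2) by ring.
    apply pow_incr. split; [apply pow2_ge_0 | exact Hw]. }
  assert (Hsplit : t - x = u * (INR k - INR n * y) + w + (y - x)).
  { unfold w. replace (u * (INR k - INR n * y)) with (u * INR k - (u * INR n) * y) by ring.
    rewrite Hum. ring. }
  rewrite Hsplit. split.
  - eapply Rle_trans; [apply sum3_sqr_le|]. rewrite Rpow_mult_distr. lra.
  - eapply Rle_trans; [apply sum3_pow4_le|]. rewrite Rpow_mult_distr. lra.
Qed.

Lemma kantorovich_abs_le_moments n h x y eps C :
  in01 y -> 0 <= eps -> 0 <= C -> (forall s, continuous h s) ->
  (forall t, in01 t -> Rabs (h t) <= eps * (t - x) ^ 2 + C * (t - x) ^ 4) ->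
  let u := / (INR n + 1) in
  let s := y * (1 - y) in
  Rabs (kantorovich n h y)
    <= 3 * eps * (u ^ 2 * (INR n * s) + u ^ 2 + (y - x) ^ 2)
       + 27 * C * (u ^ 4 * (INR n * s * (1 + 3 * (INR n - 2) * s)) + u ^ 4 + (y - x) ^ 4).
Proof.
  intros Hy He HC Hh Hrem u s.
  set (psi := fun k => 3 * eps * (u ^ 2 * (INR k - INR n * y) ^ 2 + u ^ 2 + (y - x) ^ 2)
                     + 27 * C * (u ^ 4 * (INR k - INR n * y) ^ 4 + u ^ 4 + (y - x) ^ 4)).
  apply Rle_trans with (bernstein_mean n y psi).
  - apply bernstein_mean_abs_le; [exact Hy|]. intros k Hk.
    apply cell_mean_abs_le; auto. intros t Ht.
    destruct (cell_deviation_pow_le n k x y t Hk Hy Ht) as [H2 H4].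
    destruct (cell_bounds n k Hk) as (_ & _ & H0 & H1).
    eapply Rle_trans; [apply Hrem; unfold in01; lra|].
    pose proof (Rmult_le_compat_l eps _ _ He H2). pose proof (Rmult_le_compat_l C _ _ HC H4).
    unfold psi, u. lra.
  - right. rewrite (bernstein_mean_ext _ _ psi
      (fun k => (3 * eps * u ^ 2) * (INR k - INR n * y) ^ 2
                + ((27 * C * u ^ 4) * (INR k - INR n * y) ^ 4
                   + (3 * eps * (u ^ 2 + (y - x) ^ 2) + 27 * C * (u ^ 4 + (y - x) ^ 4)))))
      by (intros; unfold psi; ring).
    rewrite !bernstein_mean_lin, !bernstein_mean_const,
      bernstein_central_moment2, bernstein_central_moment4.
    unfold s. ring.
Qed.

Lemma scaled_second_moment_le m u s d :
  0 <= m -> 0 < u -> m * u = 1 - u -> 0 <= s <= 1 / 4 -> Rabs d <= 1 ->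
  m * (u ^ 2 * (m * s) + u ^ 2 + d ^ 2) <= 2 + m * Rabs d.
Proof.
  intros Hm Hu Hmu Hs Hd. pose proof (Rabs_pos d).
  replace (m * (u ^ 2 * (m * s) + u ^ 2 + d ^ 2))
    with ((m * u) ^ 2 * s + (m * u) * u + m * Rabs d * Rabs d)
    by (rewrite <- (pow2_abs d); ring).
  rewrite Hmu.
  assert (m * Rabs d * Rabs d <= m * Rabs d)
    by (rewrite <- (Rmult_1_r (m * Rabs d)) at 2;
        apply Rmult_le_compat_l; [apply Rmult_le_pos|]; auto).
  assert (0 <= (1 - u) ^ 2 <= 1) by (split; [apply pow2_ge_0 | nra]).
  assert ((1 - u) ^ 2 * s <= 1) by nra. nra.
Qed.

Lemma scaled_fourth_moment_le m u s d :
  0 <= m -> 0 < u -> m * u = 1 - u -> 0 <= s <= 1 / 4 ->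
  m * (u ^ 4 * (m * s * (1 + 3 * (m - 2) * s)) + u ^ 4 + d ^ 4)
    <= 2 * u + m * Rabs d * Rabs d ^ 3.
Proof.
  intros Hm Hu Hmu Hs.
  assert (Hu1 : u <= 1) by nra.
  assert (Hmu1 : 0 <= m * u <= 1) by lra.
  assert (Hs2 : m * s * (1 + 3 * (m - 2) * s) <= m / 4 + 3 * m ^ 2 / 16).
  { assert (m * s <= m / 4) by nra. assert (s ^ 2 <= 1 / 16) by nra.
    assert (m ^ 2 * s ^ 2 <= m ^ 2 / 16) by (pose proof (pow2_ge_0 m); nra).
    assert (0 <= m * s ^ 2) by (apply Rmult_le_pos; [lra | apply pow2_ge_0]). nra. }
  assert (m * u ^ 4 * (m / 4 + 3 * m ^ 2 / 16) <= u).
  { replace (m * u ^ 4 * (m / 4 + 3 * m ^ 2 / 16))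
      with (u * ((m * u) ^ 2 * u / 4 + 3 * (m * u) ^ 3 / 16)) by field.
    assert ((m * u) ^ 2 <= 1) by nra. assert ((m * u) ^ 3 <= 1) by nra. nra. }
  assert (m * u ^ 4 <= u).
  { replace (m * u ^ 4) with (u * ((m * u) * u ^ 2)) by ring.
    assert (0 <= u ^ 2 <= 1) by (split; [apply pow2_ge_0 | nra]).
    assert (m * u * u ^ 2 <= 1) by nra. nra. }
  assert (m * u ^ 4 * (m * s * (1 + 3 * (m - 2) * s))
          <= m * u ^ 4 * (m / 4 + 3 * m ^ 2 / 16))
    by (apply Rmult_le_compat_l; [apply Rmult_le_pos; [lra | apply pow_le; lra] | exact Hs2]).
  replace (m * (u ^ 4 * (m * s * (1 + 3 * (m - 2) * s)) + u ^ 4 + d ^ 4))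
    with (m * u ^ 4 * (m * s * (1 + 3 * (m - 2) * s)) + m * u ^ 4 + m * Rabs d * Rabs d ^ 3)
    by (replace (d ^ 4) with ((d ^ 2) ^ 2) by ring; rewrite <- (pow2_abs d); ring).
  lra.
Qed.

Lemma kantorovich_remainder_bound n h x y eps C :
  in01 x -> in01 y -> 0 <= eps -> 0 <= C -> (forall s, continuous h s) ->
  (forall t, in01 t -> Rabs (h t) <= eps * (t - x) ^ 2 + C * (t - x) ^ 4) ->
  let u := / (INR n + 1) in
  let e := INR n * (y - x) in
  Rabs (INR n * kantorovich n h y)
    <= 3 * eps * (2 + Rabs e) + 27 * C * (2 * u + Rabs e * Rabs (y - x) ^ 3).
Proof.
  intros Hx Hy He HC Hh Hrem u e.
  pose proof (kantorovich_abs_le_moments n h x y eps C Hy He HC Hh Hrem) as HK. cbv zeta in HK.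
  assert (Hm : 0 <= INR n) by apply pos_INR.
  assert (Hu : 0 < u) by (unfold u; apply Rinv_0_lt_compat; lra).
  assert (Hmu : INR n * u = 1 - u) by (unfold u; field; lra).
  assert (Hs : 0 <= y * (1 - y) <= 1 / 4)
    by (unfold in01 in Hy; pose proof (pow2_ge_0 (y - 1 / 2)); split; nra).
  assert (Hd : Rabs (y - x) <= 1) by (unfold in01 in *; apply Rabs_le; lra).
  pose proof (scaled_second_moment_le _ _ _ (y - x) Hm Hu Hmu Hs Hd) as T2.
  pose proof (scaled_fourth_moment_le _ _ _ (y - x) Hm Hu Hmu Hs) as T4.
  assert (He' : Rabs e = INR n * Rabs (y - x))
    by (unfold e; rewrite Rabs_mult, (Rabs_pos_eq (INR n)); auto).
  rewrite He', Rabs_mult, (Rabs_pos_eq (INR n)) by auto.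
  apply (Rmult_le_compat_l (INR n)) in HK; auto.
  fold u in HK. nra.
Qed.

Local Ltac lim_arith :=
  repeat first
    [ assumption
    | apply is_lim_seq_const
    | apply is_lim_seq_minus'
    | apply is_lim_seq_plus'
    | apply is_lim_seq_mult'
    | apply (is_lim_seq_abs _ (Finite _)) ].

Lemma is_lim_seq_inv_succ : is_lim_seq (fun n => / (INR n + 1)) 0.
Proof.
  apply (is_lim_seq_ext (fun n => / INR (S n))); [intros; rewrite S_INR; auto|].
  replace (Finite 0) with (Rbar_inv p_infty) by reflexivity.
  apply is_lim_seq_inv; [|discriminate]. apply -> is_lim_seq_incr_1. apply is_lim_seq_INR.
Qed.

Lemma is_lim_seq_of_scaled (d : nat -> R) (e : R) :
  is_lim_seq (fun n => INR n * d n) e -> is_lim_seq d 0.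
Proof.
  intros H. apply is_lim_seq_incr_1. apply -> is_lim_seq_incr_1 in H.
  apply (is_lim_seq_ext (fun n => INR (S n) * d (S n) * / (INR n + 1))).
  { intros n. rewrite S_INR. field. pose proof (pos_INR n). lra. }
  replace 0 with (e * 0) by ring.
  apply is_lim_seq_mult'; [exact H | apply is_lim_seq_inv_succ].
Qed.

Lemma is_lim_seq_0_of_eps_bound (a c : nat -> R) (lc : R) : is_lim_seq c lc ->
  (forall eps, 0 < eps -> exists b, is_lim_seq b 0 /\
     forall n, Rabs (a n) <= eps * c n + b n) ->
  is_lim_seq a 0.
Proof.
  intros Hc Hab. apply is_lim_seq_spec. intros eps0.
  pose proof (cond_pos eps0) as He0.
  set (K := Rabs lc + 1). assert (HK : 0 < K) by (unfold K; pose proof (Rabs_pos lc); lra).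
  destruct (Hab (eps0 / (2 * K))) as [b [Hb Hbound]].
  { apply Rdiv_lt_0_compat; lra. }
  apply is_lim_seq_spec in Hc. apply is_lim_seq_spec in Hb.
  generalize (filter_and _ _ (Hc (mkposreal 1 Rlt_0_1)) (Hb (pos_div_2 eps0))).
  apply filter_imp. simpl. intros n [Hcn Hbn].
  rewrite Rminus_0_r. rewrite Rminus_0_r in Hbn.
  assert (Hcn' : c n <= K) by (unfold K; pose proof (Rle_abs lc);
                               pose proof (Rle_abs (c n - lc)); lra).
  assert (eps0 / (2 * K) * c n <= eps0 / 2).
  { replace (eps0 / 2) with (eps0 / (2 * K) * K) by (field; lra).
    apply Rmult_le_compat_l; [apply Rlt_le, Rdiv_lt_0_compat|]; lra. }
  pose proof (Hbound n). pose proof (Rle_abs (b n)). lra.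
Qed.

Lemma kantorovich_quadratic_limit (x a b c e : R) (y : nat -> R) :
  is_lim_seq (fun n => INR n * (y n - x)) e ->
  is_lim_seq (fun n => INR n * (kantorovich n (fun t => a + b * (t - x) + c * (t - x) ^ 2) (y n) - a))
    (b * (e + 1 / 2 - x) + c * (x * (1 - x))).
Proof.
  intros He.
  set (u := fun n => / (INR n + 1)).
  set (en := fun n => INR n * (y n - x)).
  assert (Hu : is_lim_seq u 0) by apply is_lim_seq_inv_succ.
  assert (Hyx : is_lim_seq y x).
  { apply (is_lim_seq_ext (fun n => x + (y n - x))); [intros; ring|].
    replace (Finite x) with (Finite (x + 0)) by (f_equal; ring).
    lim_arith. apply (is_lim_seq_of_scaled _ e He). }
  apply (is_lim_seq_ext (fun n => b * ((1 - u n) * (en n + 1 / 2 - x))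
           + c * ((1 - u n) * (1 - 2 * u n) * (y n * (1 - y n)) + u n * (1 - u n) * / 3
                  + 2 * en n * u n * (1 / 2 - y n) + en n * (y n - x)))).
  { intros n. rewrite kantorovich_quadratic. reflexivity. }
  replace (b * (e + 1 / 2 - x) + c * (x * (1 - x)))
    with (b * ((1 - 0) * (e + 1 / 2 - x))
          + c * ((1 - 0) * (1 - 2 * 0) * (x * (1 - x)) + 0 * (1 - 0) * / 3
                 + 2 * e * 0 * (1 / 2 - x) + e * (x - x))) by ring.
  lim_arith.
Qed.

Lemma kantorovich_taylor_remainder_limit (g g1 : R -> R) (g2x x e : R) (y : nat -> R) :
  deriv01 g g1 -> deriv01_at g1 x g2x -> in01 x -> (forall n, in01 (y n)) ->
  is_lim_seq (fun n => INR n * (y n - x)) e ->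
  is_lim_seq (fun n => INR n * kantorovich n
    (fun t => g (clamp t) - (g x + g1 x * (t - x) + g2x / 2 * (t - x) ^ 2)) (y n)) 0.
Proof.
  intros Hg Hg1 Hx Hy He.
  set (Rem := fun t => g (clamp t) - (g x + g1 x * (t - x) + g2x / 2 * (t - x) ^ 2)).
  assert (HRem : forall s, continuous Rem s).
  { intros s. apply (continuous_minus (fun t => g (clamp t))).
    - apply (continuous_clamp_comp g g1 Hg).
    - apply (ex_derive_continuous (fun t => g x + g1 x * (t - x) + g2x / 2 * (t - x) ^ 2)).
      auto_derive. auto. }
  set (en := fun n => INR n * (y n - x)).
  assert (Hyx : is_lim_seq (fun n => y n - x) 0) by apply (is_lim_seq_of_scaled _ e He).
  apply (is_lim_seq_0_of_eps_bound _ (fun n => 3 * (2 + Rabs (en n))) (3 * (2 + Rabs e)));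
    [lim_arith|].
  intros eps Heps.
  destruct (taylor_remainder_01 g g1 g2x x Hg Hg1 Hx eps Heps) as [C [HC HRemC]].
  exists (fun n => 27 * C * (2 * / (INR n + 1) + Rabs (en n) * Rabs (y n - x) ^ 3)). split.
  - apply (is_lim_seq_ext (fun n => 27 * C * (2 * / (INR n + 1)
             + Rabs (en n) * (Rabs (y n - x) * (Rabs (y n - x) * Rabs (y n - x)))))).
    { intros n. ring. }
    replace (Finite 0) with (Finite (27 * C * (2 * 0 + Rabs e * (Rabs 0 * (Rabs 0 * Rabs 0)))))
      by (f_equal; rewrite Rabs_R0; ring).
    pose proof is_lim_seq_inv_succ. lim_arith.
  - intros n.
    assert (HRemB : forall t, in01 t -> Rabs (Rem t) <= eps * (t - x) ^ 2 + C * (t - x) ^ 4).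
    { intros t Ht. unfold Rem. rewrite clamp_id by auto. apply HRemC; auto. }
    pose proof (kantorovich_remainder_bound n Rem x (y n) eps C Hx (Hy n)
                  (Rlt_le _ _ Heps) HC HRem HRemB) as H.
    cbv zeta in H. unfold en. lra.
Qed.

Theorem kantorovich_voronovskaya (g g1 : R -> R) (g2x x e : R) (y : nat -> R) :
  deriv01 g g1 -> deriv01_at g1 x g2x -> in01 x -> (forall n, in01 (y n)) ->
  is_lim_seq (fun n => INR n * (y n - x)) e ->
  is_lim_seq (fun n => INR n * (kantorovich n g (y n) - g x))
    (g1 x * (e + 1 / 2 - x) + g2x * (x * (1 - x) / 2)).
Proof.
  intros Hg Hg1 Hx Hy He.
  set (P := fun t => g x + g1 x * (t - x) + g2x / 2 * (t - x) ^ 2).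
  set (Rem := fun t => g (clamp t) - P t).
  assert (HP : forall s, continuous P s).
  { intros s. apply (ex_derive_continuous P). unfold P. auto_derive. auto. }
  assert (Hsplit : forall n, INR n * (kantorovich n g (y n) - g x) =
            INR n * (kantorovich n P (y n) - g x) + INR n * kantorovich n Rem (y n)).
  { intros n. rewrite (kantorovich_ext01 n g (fun t => P t + Rem t)).
    - rewrite kantorovich_plus; [ring | exact HP |]. intros s.
      apply (continuous_minus (fun t => g (clamp t)) P); auto.
      apply (continuous_clamp_comp g g1 Hg).
    - intros t Ht. unfold Rem. rewrite clamp_id by auto. ring. }
  apply (is_lim_seq_ext _ _ _ (fun n => eq_sym (Hsplit n))).
  replace (g1 x * (e + 1 / 2 - x) + g2x * (x * (1 - x) / 2))
    with (g1 x * (e + 1 / 2 - x) + g2x / 2 * (x * (1 - x)) + 0) by field.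
  apply is_lim_seq_plus'.
  - apply kantorovich_quadratic_limit; auto.
  - apply (kantorovich_taylor_remainder_limit g g1 g2x x e y); auto.
Qed.

Lemma ge0_of_derive_ge0 (phi dphi : R -> R) v : 0 <= v -> phi 0 = 0 ->
  (forall s, 0 <= s -> is_derive phi s (dphi s) /\ 0 <= dphi s) -> 0 <= phi v.
Proof.
  intros Hv H0 Hd.
  destruct (MVT_gen phi 0 v dphi) as [c [Hc Heq]].
  - intros s Hs. rewrite Rmin_left in Hs by lra. apply Hd. lra.
  - intros s Hs. rewrite Rmin_left in Hs by lra.
    apply continuity_pt_filterlim, (ex_derive_continuous phi).
    eexists. apply Hd. lra.
  - rewrite Rmin_left in Hc by lra. rewrite H0, Rminus_0_r in Heq. rewrite Rminus_0_r in Heq.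
    rewrite Heq. apply Rmult_le_pos; [apply Hd|]; lra.
Qed.

Lemma ln_1p_bounds v : 0 <= v -> v - v ^ 2 / 2 <= ln (1 + v) <= v - v ^ 2 / 2 + v ^ 3 / 3.
Proof.
  intros Hv. split.
  - apply Rminus_le_0.
    apply (ge0_of_derive_ge0 (fun s => ln (1 + s) - (s - s ^ 2 / 2)) (fun s => s ^ 2 / (1 + s)));
      auto.
    + rewrite Rplus_0_r, ln_1. field.
    + intros s Hs. split.
      * auto_derive; [lra | field; lra].
      * apply Rdiv_le_0_compat; [apply pow2_ge_0 | lra].
  - apply Rminus_le_0.
    apply (ge0_of_derive_ge0 (fun s => s - s ^ 2 / 2 + s ^ 3 / 3 - ln (1 + s))
             (fun s => s ^ 3 / (1 + s))); auto.
    + rewrite Rplus_0_r, ln_1. field.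
    + intros s Hs. split.
      * auto_derive; [lra | field; lra].
      * apply Rdiv_le_0_compat; [apply pow_le | ]; lra.
Qed.

Lemma ln_1p_div_bounds t : 0 < t <= 1 -> 1 - t / 2 <= ln (1 + t) / t <= 1.
Proof.
  intros Ht. destruct (ln_1p_bounds t ltac:(lra)) as [Hlo Hhi].
  split; apply (Rmult_le_reg_r t); try lra;
    unfold Rdiv; rewrite Rmult_assoc, Rinv_l, Rmult_1_r by lra; nra.
Qed.

Lemma log_ratio_numerator_bounds x t : 0 <= x <= 1 -> 0 < t <= 1 ->
  x * (1 - x) / 2 - t / 3 <= (ln (1 + x * t) - x * ln (1 + t)) / t ^ 2
    <= x * (1 - x) / 2 + t / 3.
Proof.
  intros Hx Ht.
  destruct (ln_1p_bounds (x * t) ltac:(nra)) as [Hxlo Hxhi].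
  destruct (ln_1p_bounds t ltac:(lra)) as [Hlo Hhi].
  assert (Ht2 : 0 < t ^ 2) by nra.
  assert (Hx3 : x ^ 3 <= 1) by (simpl; nra).
  assert (Ht3 : 0 <= t ^ 3) by (apply pow_le; lra).
  split; apply (Rmult_le_reg_r (t ^ 2)); auto;
    unfold Rdiv; rewrite ?Rmult_assoc, Rinv_l, Rmult_1_r by lra.
  - assert (x * ln (1 + t) <= x * (t - t ^ 2 / 2 + t ^ 3 / 3)) by (apply Rmult_le_compat_l; lra).
    assert (x * t ^ 3 <= t ^ 3) by nra. nra.
  - assert (x * (t - t ^ 2 / 2) <= x * ln (1 + t)) by (apply Rmult_le_compat_l; lra).
    assert (x ^ 3 * t ^ 3 <= t ^ 3) by nra. nra.
Qed.

Lemma is_lim_seq_log_ratio x (t : nat -> R) : in01 x -> (forall n, 0 < t n <= 1) ->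
  is_lim_seq t 0 ->
  is_lim_seq (fun n => (ln (1 + x * t n) / ln (1 + t n) - x) / t n) (x * (1 - x) / 2).
Proof.
  intros Hx Ht Ht0. unfold in01 in Hx.
  assert (Hln : forall n, 0 < ln (1 + t n)).
  { intros n. rewrite <- ln_1. apply ln_increasing; pose proof (Ht n); lra. }
  apply (is_lim_seq_ext (fun n => ((ln (1 + x * t n) - x * ln (1 + t n)) / t n ^ 2)
                                  / (ln (1 + t n) / t n))).
  { intros n. pose proof (Ht n). pose proof (Hln n). field. lra. }
  replace (x * (1 - x) / 2) with ((x * (1 - x) / 2) / 1) by field.
  assert (Ht3 : is_lim_seq (fun n => t n / 3) 0).
  { replace (Finite 0) with (Finite (0 / 3)) by (f_equal; field).
    apply is_lim_seq_div'; [exact Ht0 | apply is_lim_seq_const | lra]. }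
  apply is_lim_seq_div'; [| |lra].
  - apply (is_lim_seq_le_le (fun n => x * (1 - x) / 2 - t n / 3) _
                            (fun n => x * (1 - x) / 2 + t n / 3)).
    + intros n. apply log_ratio_numerator_bounds; auto.
    + replace (x * (1 - x) / 2) with (x * (1 - x) / 2 - 0) at 1 by ring. lim_arith.
    + replace (x * (1 - x) / 2) with (x * (1 - x) / 2 + 0) at 1 by ring. lim_arith.
  - apply (is_lim_seq_le_le (fun n => 1 - t n / 3 * (3 / 2)) _ (fun _ => 1)).
    + intros n. replace (t n / 3 * (3 / 2)) with (t n / 2) by field.
      apply ln_1p_div_bounds; auto.
    + replace 1 with (1 - 0 * (3 / 2)) at 1 by ring. lim_arith.
    + apply is_lim_seq_const.
Qed.

Lemma a_n1_log_ratio mu n x : 0 < mu ->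
  let t := / (INR (n + 1) * (1 + mu)) in
  a_n1 mu n x = ln (1 + x * t) / ln (1 + t) /\ 0 < t <= 1.
Proof.
  intros Hmu t.
  assert (Hn : 1 <= INR (n + 1)) by (rewrite plus_INR; simpl; pose proof (pos_INR n); lra).
  split.
  - unfold a_n1, t. unfold Rdiv. rewrite Rmult_1_l. reflexivity.
  - assert (H1 : 1 <= INR (n + 1) * (1 + mu)) by nra.
    unfold t. split; [apply Rinv_0_lt_compat; lra|].
    rewrite <- Rinv_1. apply Rinv_le_contravar; lra.
Qed.

Lemma a_n1_in01 mu n x : 0 < mu -> in01 x -> in01 (a_n1 mu n x).
Proof.
  intros Hmu Hx. destruct (a_n1_log_ratio mu n x Hmu) as [-> Ht].
  set (t := / (INR (n + 1) * (1 + mu))) in *. unfold in01 in *.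
  assert (Hlnt : 0 < ln (1 + t)) by (rewrite <- ln_1; apply ln_increasing; lra).
  assert (0 <= ln (1 + x * t)) by (rewrite <- ln_1; apply ln_le; nra).
  assert (ln (1 + x * t) <= ln (1 + t)) by (apply ln_le; nra).
  split; [apply Rdiv_le_0_compat; lra|].
  apply (Rmult_le_reg_r (ln (1 + t))); auto.
  unfold Rdiv. rewrite Rmult_assoc, Rinv_l by lra. lra.
Qed.

Lemma is_lim_seq_a_n1 mu x : 0 < mu -> in01 x ->
  is_lim_seq (fun n => INR n * (a_n1 mu n x - x)) (x * (1 - x) / (2 * (1 + mu))).
Proof.
  intros Hmu Hx.
  set (t := fun n => / (INR (n + 1) * (1 + mu))).
  assert (Ht : forall n, 0 < t n <= 1) by (intros n; apply (a_n1_log_ratio mu n x Hmu)).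
  apply (is_lim_seq_ext (fun n => (1 - / (INR n + 1)) / (1 + mu)
                                  * ((ln (1 + x * t n) / ln (1 + t n) - x) / t n))).
  { intros n. destruct (a_n1_log_ratio mu n x Hmu) as [-> _]. fold (t n).
    set (r := ln (1 + x * t n) / ln (1 + t n)).
    unfold t. rewrite plus_INR. simpl (INR 1). field. pose proof (pos_INR n). lra. }
  replace (x * (1 - x) / (2 * (1 + mu))) with ((1 - 0) / (1 + mu) * (x * (1 - x) / 2))
    by (field; lra).
  apply is_lim_seq_mult'; [|apply is_lim_seq_log_ratio; auto].
  - apply is_lim_seq_div'; [|apply is_lim_seq_const|lra].
    lim_arith. apply is_lim_seq_inv_succ.
  - apply (is_lim_seq_ext (fun n => / (INR n + 1) / (1 + mu))).
    { intros n. unfold t. rewrite plus_INR. simpl (INR 1). field. pose proof (pos_INR n). lra. }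
    replace (Finite 0) with (Finite (0 / (1 + mu))) by (f_equal; field; lra).
    apply is_lim_seq_div'; [apply is_lim_seq_inv_succ | apply is_lim_seq_const | lra].
Qed.

Theorem theorem4p1 (mu : R) (f : R -> R) (g1 g2 : R -> R) :
  0 < mu ->
  C2_01 f ->
  deriv01 (f_mu mu f) g1 ->   (* g1 = f_mu' on [0,1] *)
  deriv01 g1 g2 ->            (* g2 = f_mu'' on [0,1] *)
  forall x, in01 x ->
    is_lim_seq (fun n : nat => INR n * (LK mu n f x - f x))
      (ln_mu mu x *
        (g1 x * (1 / 2 + (x - x ^ 2) / (2 * (1 + mu)) - x)
         + g2 x * ((x - x ^ 2) / 2))).
Proof.
  intros Hmu _ Hg1 Hg2 x Hx.
  assert (Hln : 0 < ln_mu mu x).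
  { unfold ln_mu. rewrite <- ln_1. apply ln_increasing; unfold in01 in Hx; lra. }
  apply (is_lim_seq_ext (fun n => ln_mu mu x *
           (INR n * (kantorovich n (f_mu mu f) (a_n1 mu n x) - f_mu mu f x)))).
  { intros n. rewrite LK_kantorovich. unfold f_mu at 2. field. lra. }
  replace (g1 x * (1 / 2 + (x - x ^ 2) / (2 * (1 + mu)) - x) + g2 x * ((x - x ^ 2) / 2))
    with (g1 x * (x * (1 - x) / (2 * (1 + mu)) + 1 / 2 - x) + g2 x * (x * (1 - x) / 2))
    by (field; lra).
  apply is_lim_seq_mult'; [apply is_lim_seq_const|].
  apply (kantorovich_voronovskaya _ g1 (g2 x) x _ _ Hg1 (Hg2 x Hx) Hx).
  - intros n. apply a_n1_in01; auto.
  - apply is_lim_seq_a_n1; auto.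
Qed.
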